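(* Let $G$ be a bicyclic graph with diameter $3$. Then $G$ is group vertex magic if and only if $G$ is isomorphic to $M_{11}(0,0)$, the graph on vertices $v_1,\dots,v_7$ consisting of the $5$-cycle $v_1v_2v_3v_4v_5v_1$ and the triangle $v_1v_6v_7$ (i.e. a $C_5$ and a $C_3$ sharing exactly one vertex, with no further vertices or edges).
   Context: All graphs are finite, simple and undirected. A bicyclic graph is a connected graph with $|E(G)|=|V(G)|+1$. For an additive abelian group $\mathcal{A}$ with identity $0$, a map $\ell:V(G)\to\mathcal{A}\setminus\{0\}$ is an $\mathcal{A}$-vertex magic labeling if there is $\mu\in\mathcal{A}$ with $\omega(v)=\sum_{u\in N(v)}\ell(u)=\mu$ for every vertex $v$ (where $N(v)$ is the set of neighbours of $v$); $G$ is $\mathcal{A}$-vertex magic if it admits such a labeling, and $G$ is group vertex magic if it is $\mathcal{A}$-vertex magic for every nontrivial abelian group $\mathcal{A}$. *)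

From mathcomp Require Import all_boot all_order all_algebra.
Set Implicit Arguments. Unset Strict Implicit. Unset Printing Implicit Defensive.
Import GRing.Theory.
Local Open Scope ring_scope.

Definition simple_graph (T : finType) (e : rel T) : Prop :=
  symmetric e /\ irreflexive e.

Definition edge_set (T : finType) (e : rel T) : {set {set T}} :=
  [set [set x; y] | x in T, y in T & e x y].

Definition connected_graph (T : finType) (e : rel T) : Prop :=
  forall x y : T, connect e x y.

Definition bicyclic (T : finType) (e : rel T) : Prop :=
  connected_graph e /\ #|edge_set e| = (#|T| + 1)%N.

Fixpoint within (T : finType) (e : rel T) (k : nat) (x y : T) : bool :=
  match k with
  | 0%N => x == y
  | k'.+1 => (x == y) || [exists z, e x z && within e k' z y]
  end.

(* diameter = d (for a connected graph): every pair at distance <= d and some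
   pair at distance exactly d (i.e. not <= d-1). *)
Definition diameter_eq (T : finType) (e : rel T) (d : nat) : Prop :=
  (forall x y : T, within e d x y) /\
  (exists x y : T, ~~ within e d.-1 x y).

Definition vertex_magic_labeling (A : zmodType) (T : finType) (e : rel T)
    (l : T -> A) : Prop :=
  (forall v, l v != 0) /\
  exists mu : A, forall v : T, \sum_(u | e v u) l u = mu.

Definition A_vertex_magic (A : zmodType) (T : finType) (e : rel T) : Prop :=
  exists l : T -> A, vertex_magic_labeling e l.

Definition group_vertex_magic (T : finType) (e : rel T) : Prop :=
  forall A : zmodType, (exists a : A, a != 0) -> A_vertex_magic A e.

(* M_11(0,0) on 'I_7 (v_i is vertex i-1): 5-cycle 0-1-2-3-4-0 and
   triangle 0-5-6-0. *)
Definition M11_edges : seq (nat * nat) :=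
  [:: (0,1); (1,2); (2,3); (3,4); (4,0); (0,5); (5,6); (6,0)]%N.

Definition M11 : rel 'I_7 :=
  fun x y => ((nat_of_ord x, nat_of_ord y) \in M11_edges)
          || ((nat_of_ord y, nat_of_ord x) \in M11_edges).

Definition graph_iso (T U : finType) (e : rel T) (f : rel U) : Prop :=
  exists g : T -> U, bijective g /\ forall x y, f (g x) (g y) = e x y.

(* A Z/2-magic labeling is constantly 1, so all degrees have the parity of
   the magic constant; they sum to 2|E| = 2|V| + 2.

   If all degrees are odd, G has a leaf, and every vertex is within distance
   2 of its support s.  The edges outside a breadth-first tree rooted at s
   form a graph with two edges, whose odd-degree vertices lie at depth 1 and
   each carry a leaf of G.  Two leaves of G are at distance at most 3, so
   their supports are equal or adjacent: the odd-degree vertices of the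
   two-edge graph would be pairwise adjacent, which is impossible.

   If all degrees are even, one vertex c has degree 4 and all others degree 2,
   so G is two cycles through c.  Diameter 3 rules out two cycles of length at
   least 4 as well as two triangles.  A triangle c a1 a2 with a 4-cycle through
   c has no Z-magic labeling l, since the equations at a1, a2, c and the vertex
   opposite c force 2 l(a1) = 0.  What remains is a triangle and a 5-cycle,
   i.e. M11(0,0), which has a labeling by +a and -a with all neighbourhood
   sums 0. *)

From mathcomp Require Import all_boot all_order all_algebra.
From mathcomp Require Import zify.
Set Implicit Arguments. Unset Strict Implicit. Unset Printing Implicit Defensive.
Import GRing.Theory.

Section NatSums.
Variables (T : finType) (f : T -> nat).

Lemma leq_sum_subset (A : {pred T}) : \sum_(x in A) f x <= \sum_x f x.
Proof. by rewrite [X in _ <= X](bigID [in A]) leq_addr. Qed.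

Lemma leq_mul_card_sum (A : {pred T}) k :
  (forall x, x \in A -> k <= f x) -> k * #|A| <= \sum_(x in A) f x.
Proof. by move=> lekf; rewrite mulnC -sum_nat_const; apply: leq_sum. Qed.

Lemma leq_sum_uniq (s : seq T) : uniq s -> \sum_(x <- s) f x <= \sum_x f x.
Proof. by move=> us; rewrite big_uniq // leq_sum_subset. Qed.

End NatSums.

Lemma set2_eq (T : finType) (x y a b : T) : x != y ->
  ([set x; y] == [set a; b]) = ((x == a) && (y == b)) || ((x == b) && (y == a)).
Proof.
move=> xy; apply/eqP/idP => [E | /orP[] /andP[/eqP-> /eqP->] //]; last first.
  by rewrite setUC.
have xab : x \in [set a; b] by rewrite -E set21.
have yab : y \in [set a; b] by rewrite -E set22.
have axy : a \in [set x; y] by rewrite E set21.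
have bxy : b \in [set x; y] by rewrite E set22.
move: xab yab axy bxy xy; rewrite !inE.
by move=> /orP[]/eqP-> /orP[]/eqP->; rewrite ?eqxx ?orbT.
Qed.

Lemma uniq4_neq (X : eqType) (a1 a2 a3 a4 : X) : uniq [:: a1; a2; a3; a4] ->
  [/\ a1 != a2, a1 != a3, a1 != a4 & [/\ a2 != a3, a2 != a4 & a3 != a4]].
Proof. by rewrite /= !inE !negb_or => /and4P[/and3P[-> -> ->] /andP[-> ->] ->]. Qed.

Lemma distinct3_in3 (X : eqType) (p q r x y z : X) :
  x \in [:: p; q; r] -> y \in [:: p; q; r] -> z \in [:: p; q; r] ->
  x != y -> x != z -> y != z -> p \in [:: x; y; z] /\ q \in [:: x; y; z].
Proof.
rewrite !inE.
by move=> /or3P[]/eqP-> /or3P[]/eqP-> /or3P[]/eqP->; rewrite ?eqxx //= ?orbT.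
Qed.

Section Degree.
Variables (T : finType) (e : rel T).

Definition nbhd x := [set y | e x y].
Definition deg x := #|nbhd x|.

Lemma in_nbhd x y : (y \in nbhd x) = e x y.
Proof. by rewrite inE. Qed.

Lemma sum_nbhd_const (A : nmodType) (a : A) x :
  (\sum_(u | e x u) a = a *+ deg x)%R.
Proof. by rewrite -sumr_const; apply: eq_bigl => u; rewrite inE. Qed.

Hypothesis irr : irreflexive e.

Lemma adj_neq x y : e x y -> x != y.
Proof. by apply: contraTneq => ->; rewrite irr. Qed.

Lemma deg_le_card x : deg x <= #|T|.-1.
Proof.
rewrite -(cardC1 x); apply/subset_leq_card/subsetP => y.
by rewrite !inE; apply: contraTneq => ->; rewrite irr.
Qed.

Hypothesis sym : symmetric e.

Lemma handshake : \sum_x deg x = 2 * #|edge_set e|.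
Proof.
have -> : \sum_x deg x = \sum_(p : T * T | e p.1 p.2) 1.
  transitivity (\sum_x \sum_(y | e x y) 1); last exact: pair_big_dep.
  apply: eq_bigr => x _.
  by rewrite /deg -sum1_card; apply: eq_bigl => y; rewrite inE.
rewrite (partition_big (fun p => [set p.1; p.2]) (mem (edge_set e))) /=; last first.
  by case=> x y /= exy; apply/imset2P; exists x y; rewrite ?inE.
rewrite mulnC -sum_nat_const; apply: eq_bigr => E /imset2P[a b _].
rewrite inE => /andP[_ eab] ->.
have ab := adj_neq eab.
have -> : 2 = #|[set (a, b); (b, a)]| by rewrite cards2 xpair_eqE (negbTE ab).
rewrite sum1_card.
apply: eq_card => -[x y]; rewrite !inE /= !xpair_eqE unfold_in /=.
case exy: (e x y) => /=.
  by rewrite set2_eq // adj_neq.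
by apply/esym/negbTE/negP => /orP[] /andP[/eqP xa /eqP yb]; subst;
  rewrite ?(sym b) eab in exy.
Qed.

End Degree.

Arguments within : simpl never.

Section Walks.
Variables (T : finType) (e : rel T).

Definition adj_seq x (s : seq T) := forall y, e x y = (y \in s).

Lemma within0 x y : within e 0 x y = (x == y).
Proof. by []. Qed.

Lemma withinS k x y :
  within e k.+1 x y = (x == y) || [exists z, e x z && within e k z y].
Proof. by []. Qed.

Lemma within_refl k x : within e k x x.
Proof. by case: k => [|k]; rewrite ?within0 ?withinS eqxx. Qed.

Lemma deg_gt0_of_within k (x0 y0 x : T) :
  (forall x y, within e k x y) -> x0 != y0 -> 0 < deg e x.
Proof.
move=> within_k x0y0; have [y xy] : exists y, x != y.
  by case: (eqVneq x x0) => [-> | ]; [exists y0 | exists x0].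
move: (within_k x y); case: k {within_k} => [|k]; rewrite ?within0 ?withinS (negbTE xy) //=.
by case/existsP=> z /andP[xz _]; apply/card_gt0P; exists z; rewrite in_nbhd.
Qed.

Lemma within_adj_seq x s k y : adj_seq x s ->
  within e k.+1 x y = (x == y) || has (fun z => within e k z y) s.
Proof.
move=> xs; rewrite withinS; congr orb.
apply/existsP/hasP => [[z /andP[xz zy]] | [z sz zy]]; exists z => //.
  by rewrite -xs.
by rewrite xs sz.
Qed.

Lemma within1 x y : within e 1 x y = (x == y) || e x y.
Proof.
rewrite withinS; congr orb.
apply/existsP/idP => [[z /andP[xz]] | xy]; first by rewrite within0 => /eqP <-.
by exists y; rewrite xy within0 eqxx.
Qed.

Lemma within_mono k x y : within e k x y -> within e k.+1 x y.
Proof.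
elim: k x => [|k IHk] x; first by rewrite within0 withinS => ->.
rewrite withinS [within _ k.+2 _ _]withinS => /orP[-> // | /existsP[z /andP[xz]]].
by move=> /IHk zy; apply/orP; right; apply/existsP; exists z; rewrite xz.
Qed.

Lemma adj_seq_of_deg1 x y : deg e x = 1 -> e x y -> adj_seq x [:: y].
Proof.
move=> /eqP/cards1P[z Nx] xy w; have: y \in nbhd e x by rewrite in_nbhd.
by rewrite -in_nbhd Nx !inE => /eqP->.
Qed.

Lemma adj_seq_of_deg2 x y z : deg e x = 2 -> e x y -> e x z -> y != z ->
  adj_seq x [:: y; z].
Proof.
move=> dx xy xz yz w.
suff E : [set y; z] = nbhd e x by rewrite -in_nbhd -E !inE.
apply/eqP; rewrite eqEcard cards2 yz -/(deg e x) dx andbT.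
by apply/subsetP => u /set2P[]->; rewrite inE.
Qed.

Lemma deg2_other_nbr x y : deg e x = 2 -> e x y ->
  exists z, [/\ z != y, e x z & adj_seq x [:: y; z]].
Proof.
move=> dx xy; have: 0 < #|nbhd e x :\ y|.
  by move: dx; rewrite /deg (cardsD1 y) inE xy; lia.
case/card_gt0P => z; rewrite !inE => /andP[zy xz].
by exists z; split => //; apply: adj_seq_of_deg2; rewrite // eq_sym.
Qed.

Lemma deg4_adj_seq x a1 a2 : deg e x = 4 -> e x a1 -> e x a2 -> a1 != a2 ->
  exists a3 a4, uniq [:: a1; a2; a3; a4] /\ adj_seq x [:: a1; a2; a3; a4].
Proof.
move=> dx xa1 xa2 a12.
have sub12 : [set a1; a2] \subset nbhd e x.
  by apply/subsetP => y /set2P[]->; rewrite inE.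
have /cards2P[a3 [a4 [a34 D]]] : #|nbhd e x :\: [set a1; a2]| == 2.
  by rewrite cardsD (setIidPr sub12) cards2 a12 -/(deg e x) dx.
have a3D : a3 \in nbhd e x :\: [set a1; a2] by rewrite D set21.
have a4D : a4 \in nbhd e x :\: [set a1; a2] by rewrite D set22.
exists a3, a4; split.
  move: a3D a4D; rewrite !inE /= !negb_or a12 a34 => /andP[/andP[a31 a32] _].
  by move=> /andP[/andP[a41 a42] _]; rewrite !(eq_sym a1) !(eq_sym a2) a31 a32 a41 a42.
move=> y; rewrite -in_nbhd -(setID (nbhd e x) [set a1; a2]).
by rewrite (setIidPr sub12) D !inE !orbA.
Qed.

Lemma exists_deg4_adj_seq x : deg e x = 4 ->
  exists a1 a2 a3 a4, uniq [:: a1; a2; a3; a4] /\ adj_seq x [:: a1; a2; a3; a4].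
Proof.
move=> dx; have /card_gt0P[a1] : 0 < deg e x by rewrite dx.
rewrite in_nbhd => xa1; have /card_gt0P[a2] : 0 < #|nbhd e x :\ a1|.
  by move: dx; rewrite /deg (cardsD1 a1) in_nbhd xa1; lia.
rewrite !inE eq_sym => /andP[a12 xa2]; have [a3 [a4 ?]] := deg4_adj_seq dx xa1 xa2 a12.
by exists a1, a2, a3, a4.
Qed.

Lemma sum_adj_seq (A : nmodType) (f : T -> A) x s : adj_seq x s -> uniq s ->
  (\sum_(u | e x u) f u = \sum_(u <- s) f u)%R.
Proof. by move=> xs us; rewrite big_uniq //; apply: eq_bigl => u; rewrite xs. Qed.

Hypothesis sym : symmetric e.

Lemma within2_of_within1 c : (forall x, within e 1 c x) ->
  forall x y, within e 2 x y.
Proof.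
move=> c1 x y; case: (eqVneq c x) => [<- | cx]; first exact: within_mono.
have := c1 x; rewrite within1 (negbTE cx) /= => cx'.
by rewrite withinS; apply/orP; right; apply/existsP; exists c; rewrite sym cx' c1.
Qed.

End Walks.

(* [rewrite_neqs] rewrites with every hypothesis [a != b], in either
   orientation; [unfold_within] expands [within] along all known adjacency
   lists; [case_eqs] splits a disjunction of boolean equalities on the top of
   the goal and substitutes each of them. *)
Ltac rewrite_neqs := repeat match goal with
  | H : is_true (?a != ?b) |- context [?a == ?b] => rewrite (negbTE H)
  | H : is_true (?a != ?b) |- context [?b == ?a] => rewrite (eq_sym b a) (negbTE H)
  end.

Ltac unfold_within := repeat match goal with
  | H : adj_seq _ _ _ |- context [within _ (S _) _ _] => rewrite (within_adj_seq _ _ H) /=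
  end; rewrite ?within0.

Ltac case_eqs := let H := fresh in move=> H; repeat (case/orP: H => H);
  first [by move: H | move/eqP: H => H; subst; rewrite ?eqxx ?orbT //].

Lemma graph_iso_of_enum (T : finType) (e : rel T) n (f : rel 'I_n) (L : seq T) x0 :
  uniq L -> (forall x, x \in L) -> size L = n ->
  (forall i j : 'I_n, f i j = e (nth x0 L i) (nth x0 L j)) -> graph_iso e f.
Proof.
move=> UL L_all sL fE; have lt_index x : index x L < n by rewrite -sL index_mem.
exists (fun x => Ordinal (lt_index x)); split.
  exists (fun i : 'I_n => nth x0 L i) => [x | i]; first by rewrite nth_index.
  by apply: val_inj; rewrite /= index_uniq ?sL.
by move=> x y; rewrite fE /= !nth_index.
Qed.

Section Magic.
Local Open Scope ring_scope.

Lemma deg_parity_of_Z2_magic (T : finType) (e : rel T) :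
  A_vertex_magic 'Z_2 e -> forall x y, odd (deg e x) = odd (deg e y).
Proof.
move=> [l [l_neq0 [mu l_mu]]].
have l1 v : l v = 1 by move: (l v) (l_neq0 v) => -[[|[|//]] ?] //= _; exact/val_inj.
have deg_mu v : (deg e v)%:R = mu.
  by rewrite -(l_mu v) (eq_bigr (fun=> 1)) ?sum_nbhd_const // => u _; rewrite l1.
move=> x y; have := congr1 (@nat_of_ord _) (etrans (deg_mu x) (esym (deg_mu y))).
by rewrite !val_Zp_nat // !modn2; case: (odd _); case: (odd _).
Qed.

Lemma vertex_magic_iso (A : zmodType) (T U : finType) (e : rel T) (f : rel U) :
  graph_iso e f -> A_vertex_magic A f -> A_vertex_magic A e.
Proof.
move=> [g [gb gE]] [l [l_neq0 [mu l_mu]]].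
exists (l \o g); split => [v | ]; first exact: l_neq0.
exists mu => v; rewrite -(l_mu (g v)) (reindex g) /=; last exact: onW_bij.
by apply: eq_bigl => u; rewrite gE.
Qed.

Definition M11_sign (j : 'I_7) : int := if val j \in [:: 0; 1; 4]%N then 1 else -1.

Lemma M11_sign_nbhd_sum i : \sum_(j | M11 i j) M11_sign j = 0.
Proof.
rewrite big_mkcond /= !big_ord_recl big_ord0.
by case: i => -[|[|[|[|[|[|[|//]]]]]]] ?.
Qed.

Lemma M11_group_vertex_magic : group_vertex_magic M11.
Proof.
move=> A [a a0]; exists (fun j => a *~ M11_sign j); split => [j | ].
  by rewrite /M11_sign; case: ifP => _; rewrite ?mulr1z ?mulrN1z ?oppr_eq0.
by exists 0 => i; rewrite -mulrz_sumr M11_sign_nbhd_sum mulr0z.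
Qed.

End Magic.

Section DegreeSumFour.
Variables (T : finType) (F : T -> {set T}).
Hypothesis F_sym : forall x y, (y \in F x) = (x \in F y).
Hypothesis F_irr : forall x, x \notin F x.
Let d x := #|F x|.
Hypothesis sum_d : \sum_x d x = 4.

Lemma nbr_deg_gt0 x y : y \in F x -> 0 < d y.
Proof. by move=> xy; apply/card_gt0P; exists x; rewrite -F_sym. Qed.

Lemma deg_add_nbrs_le4 x : d x + \sum_(y in F x) d y <= 4.
Proof. by rewrite -sum_d -big_setU1 ?F_irr //=; apply: leq_sum_subset. Qed.

Lemma deg_le2_of_sum4 x : d x <= 2.
Proof.
have := deg_add_nbrs_le4 x; have := leq_mul_card_sum (@nbr_deg_gt0 x).
by rewrite mul1n -/(d x); lia.
Qed.

Lemma exists_odd_deg_of_sum4 : exists u, odd (d u).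
Proof.
apply/existsP; apply: contraT; rewrite negb_exists => /forallP even_d.
have [w dw] : exists w, 0 < d w.
  apply/existsP; apply: contraT; rewrite negb_exists => /forallP d0.
  by move: sum_d; rewrite big1 // => x _; move: (d0 x); case: (d x).
have dw2 : d w = 2 by move: (deg_le2_of_sum4 w) dw (even_d w); case: (d w) => [|[|[|]]].
have : 2 * #|F w| <= \sum_(y in F w) d y.
  apply: leq_mul_card_sum => y /nbr_deg_gt0; have := even_d y; case: (d y) => [|[|]] //.
by have := deg_add_nbrs_le4 w; rewrite -/(d w) dw2; lia.
Qed.

Section OddClique.
Hypothesis odd_clique : forall u v, odd (d u) -> odd (d v) -> u != v -> v \in F u.
Variables u y : T.
Hypothesis Fu : F u = [set y].

Let yFu : y \in F u. Proof. by rewrite Fu set11. Qed.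
Let uFy : u \in F y. Proof. by rewrite -F_sym yFu. Qed.
Let uy : u != y. Proof. by apply: contraTneq yFu => <-; apply: F_irr. Qed.

Lemma odd_deg_eq_leaf_nbr v : odd (d v) -> v != u -> v = y.
Proof.
move=> ov vu; apply/set1P; rewrite -Fu odd_clique // 1?eq_sym //.
by rewrite /d Fu cards1.
Qed.

Lemma leaf_nbr_deg1_absurd : d y = 1 -> False.
Proof.
move=> /eqP/cards1P[u' Fy']; have Fy : F y = [set u].
  by move: uFy; rewrite Fy' => /set1P ->.
have [z /andP[zuy dz]] : exists z, (z \notin [set u; y]) && (0 < d z).
  apply/existsP; apply: contraT; rewrite negb_exists => /forallP none.
  move: sum_d; rewrite (bigID [in [set u; y]]) /= big_setU1 ?inE // big_set1.
  rewrite /d Fu Fy !cards1 big1 // => x xuy; move: (none x); rewrite xuy.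
  by rewrite -/(d x); case: (d x).
have /card_gt0P[z' zz'] := dz.
move: zuy; rewrite !inE negb_or => /andP[zu zy].
have z'u : z' != u by apply: contraNneq zy => E; move: zz'; rewrite E F_sym Fu inE eq_sym.
have z'y : z' != y by apply: contraNneq zu => E; move: zz'; rewrite E F_sym Fy inE eq_sym.
have z'z : z' != z by apply: contraTneq zz' => ->; apply: F_irr.
have := @leq_sum_uniq _ d [:: u; y; z; z'].
rewrite /= !inE !negb_or; rewrite_neqs; rewrite sum_d !big_cons big_nil => /(_ isT).
rewrite /d Fu Fy !cards1 -/(d z) -/(d z') => le4.
have /odd_deg_eq_leaf_nbr/(_ zu)/eqP : odd (d z).
  by have := nbr_deg_gt0 zz'; move: le4 dz; case: (d z) => [|[|[|]]] //; lia.
by rewrite (negbTE zy).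
Qed.

Lemma leaf_nbr_deg2_absurd : d y = 2 -> False.
Proof.
move=> dy2; have /cards1P[y2 Fy2] : #|F y :\ u| == 1.
  by move: dy2; rewrite /d (cardsD1 u) uFy; lia.
have y2Fy : y2 \in F y by rewrite -(setD1K uFy) Fy2 !inE eqxx orbT.
have y2u : y2 != u by move: (set11 y2); rewrite -Fy2 !inE => /andP[].
have := deg_add_nbrs_le4 y.
rewrite -(setD1K uFy) big_setU1 ?setD11 // Fy2 big_set1 dy2 /d Fu cards1 -/(d y2).
move=> le4; have /odd_deg_eq_leaf_nbr/(_ y2u) y2y : odd (d y2).
  by have := nbr_deg_gt0 y2Fy; move: le4; case: (d y2) => [|[|]] //; lia.
by move: y2Fy; rewrite y2y (negbTE (F_irr y)).
Qed.

Lemma leaf_in_odd_clique_absurd : False.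
Proof.
have /orP[/eqP | /eqP] : (d y == 1) || (d y == 2).
  by move: (deg_le2_of_sum4 y) (nbr_deg_gt0 yFu); case: (d y) => [|[|[|]]].
  exact: leaf_nbr_deg1_absurd.
exact: leaf_nbr_deg2_absurd.
Qed.

End OddClique.

Lemma sum4_odd_not_clique :
  ~ (forall u v, odd (d u) -> odd (d v) -> u != v -> v \in F u).
Proof.
move=> odd_clique; have [u ou] := exists_odd_deg_of_sum4.
have /cards1P[y Fu] : d u == 1 by move: (deg_le2_of_sum4 u) ou; case: (d u) => [|[|[|]]].

exact: (leaf_in_odd_clique_absurd odd_clique Fu).
Qed.

End DegreeSumFour.

Section BreadthFirstTree.
Variables (T : finType) (e : rel T).
Hypothesis sym : symmetric e.
Hypothesis irr : irreflexive e.
Variable s : T.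
Hypothesis within2_s : forall x, within e 2 s x.

Definition depth x : nat := if x == s then 0 else if e s x then 1 else 2.

(* The default [s] of [odflt] is never used: see [parentP]. *)
Definition parent x :=
  if (x == s) || e s x then s else odflt s [pick u | e s u && e u x].

Definition nchildren x := #|[set y | e x y && (parent y == x)]|.

Definition cross_nbhd x := [set y | e x y && (parent x != y) && (parent y != x)].

Lemma depth_le2 x : depth x <= 2.
Proof. by rewrite /depth; case: ifP => //; case: ifP. Qed.

Lemma depth_eq0 x : (depth x == 0) = (x == s).
Proof. by rewrite /depth; case: ifP => //; case: ifP. Qed.

Lemma parent_root : parent s = s.
Proof. by rewrite /parent eqxx. Qed.

Lemma parent_depth1 x : depth x = 1 -> parent x = s.
Proof. by rewrite /depth /parent; case: (x == s) => //; case: (e s x). Qed.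

Lemma parentP x : x != s -> e x (parent x) /\ depth (parent x) = (depth x).-1.
Proof.
move=> xs; rewrite /parent /depth (negbTE xs) /=.
case sx: (e s x); first by rewrite eqxx sym sx.
case: pickP => [u /andP[su ux] | none] /=.
  have us : u != s by apply: contraTneq su => ->; rewrite irr.
  by rewrite sym ux (negbTE us) su.
have := within2_s x; rewrite withinS (eq_sym s) (negbTE xs) /=.
case/existsP=> z /andP[sz]; rewrite within1 => /orP[/eqP zx | zx].
  by rewrite -zx sz in sx.
by have := none z; rewrite sz zx.
Qed.

Lemma parent_parent_neq x : x != s -> parent (parent x) != x.
Proof.
move=> xs; have [_ dpx] := parentP xs; apply/eqP => ppx.
have pxs : parent x != s by apply: contra_neq xs => pxs; rewrite -ppx pxs parent_root.
have [_] := parentP pxs; rewrite ppx dpx.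
by have := depth_eq0 x; rewrite (negbTE xs); case: (depth x) => [|n] //; lia.
Qed.

Lemma cross_nbhd_sym x y : (y \in cross_nbhd x) = (x \in cross_nbhd y).
Proof. by rewrite !inE sym; case: (e y x); case: (parent x == y); case: (parent y == x). Qed.

Lemma cross_nbhd_irr x : x \notin cross_nbhd x.
Proof. by rewrite inE irr. Qed.

Lemma cross_nbhd_root : cross_nbhd s = set0.
Proof.
apply/setP => y; rewrite !inE parent_root.
by case sy: (e s y) => //=; rewrite /parent sy orbT eqxx andbF.
Qed.

Lemma nchildren_depth2 x : depth x = 2 -> nchildren x = 0.
Proof.
move=> dx2; apply/eqP; rewrite cards_eq0; apply/eqP/setP => y; rewrite !inE.
apply/negbTE/negP => /andP[xy /eqP pyx].
have xs : x != s by rewrite -depth_eq0 dx2.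
have ys : y != s by apply: contraNneq xs => ys; rewrite -pyx ys parent_root.
have [_] := parentP ys; rewrite pyx dx2.
by have := depth_le2 y; case: (depth y) => [|[|[|]]].
Qed.

Lemma deg_tree_split x : deg e x = (x != s) + nchildren x + #|cross_nbhd x|.
Proof.
rewrite /deg -(cardsID [set y | parent x == y]) -addnA; congr (_ + _).
  case: (eqVneq x s) => [-> | xs] /=.
    apply/eqP; rewrite cards_eq0; apply/eqP/setP => y; rewrite !inE parent_root.
    by apply/negbTE/negP => /andP[sy /eqP sy']; rewrite -sy' irr in sy.
  have [xpx _] := parentP xs; apply/eqP/cards1P; exists (parent x).
  apply/setP => y; rewrite !inE.
  by case: (eqVneq (parent x) y) => [<- | ]; rewrite ?xpx ?andbT ?andbF // eq_sym.
rewrite -(cardsID [set y | parent y == x]); congr (_ + _); apply: eq_card => y; rewrite !inE.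
  case: (eqVneq (parent y) x) => [pyx | ]; rewrite ?andbT ?andbF //.
  case: (eqVneq (parent x) y) => [pxy | ]; rewrite ?andbT //=.
  case: (eqVneq x s) => [xs | xs]; first by move: pxy; rewrite xs parent_root => <-; rewrite irr.
  by have := parent_parent_neq xs; rewrite pxy pyx eqxx.
by case: (e x y); case: (parent x == y); case: (parent y == x).
Qed.

Lemma sum_nchildren : \sum_x nchildren x = #|T|.-1.
Proof.
transitivity (\sum_x \sum_y (e x y && (parent y == x) : nat)).
  apply: eq_bigr => x _; rewrite /nchildren -sum1_card big_mkcond /=.
  by apply: eq_bigr => y _; rewrite inE; case: (_ && _).
rewrite exchange_big -(cardC1 s) -sum1_card [RHS]big_mkcond /=.
apply: eq_bigr => y _; rewrite (bigD1 (parent y)) //= eqxx andbT big1 ?addn0; last first.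
  by move=> x /negbTE pyx; rewrite eq_sym pyx andbF.
rewrite inE; case: (eqVneq y s) => [-> | ys] /=; first by rewrite parent_root irr.
by have [ypy _] := parentP ys; rewrite sym ypy.
Qed.

Lemma sum_cross_deg : \sum_x deg e x = 2 * (#|T| + 1) -> \sum_x #|cross_nbhd x| = 4.
Proof.
have -> : \sum_x deg e x = \sum_x (x != s : nat) + \sum_x nchildren x + \sum_x #|cross_nbhd x|.
  by rewrite -!big_split /=; apply: eq_bigr => x _; rewrite deg_tree_split.
have -> : \sum_x (x != s : nat) = #|T|.-1.
  rewrite -(cardC1 s) -sum1_card [RHS]big_mkcond /=.
  by apply: eq_bigr => x _; rewrite !inE; case: (x != s).
have : 0 < #|T| by apply/card_gt0P; exists s.
by rewrite sum_nchildren; lia.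
Qed.

Section OddDegrees.
Hypothesis sum_deg : \sum_x deg e x = 2 * (#|T| + 1).
Hypothesis odd_deg : forall x, odd (deg e x).
Hypothesis leaf_supports_adj : forall x x' a b,
  deg e x = 1 -> deg e x' = 1 -> e x a -> e x' b -> a != b -> e a b.

Lemma odd_cross_depth1 w : odd #|cross_nbhd w| -> depth w = 1 /\ 0 < nchildren w.
Proof.
move=> ow; have ws : w != s by apply: contraTneq ow => ->; rewrite cross_nbhd_root cards0.
have := odd_deg w; rewrite deg_tree_split ws !oddD ow /= addbT negbK => och.
have dw1 : depth w = 1.
  have := depth_le2 w; have := depth_eq0 w; rewrite (negbTE ws).
  by case dw: (depth w) => [|[|[|]]] // _ _; rewrite nchildren_depth2 in och.
by split; last by move: och; case: (nchildren w).
Qed.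

Lemma child_of_odd_cross_leaf w c :
  odd #|cross_nbhd w| -> e w c -> parent c = w -> deg e c = 1.
Proof.
move=> ow wc pcw; have [dw1 _] := odd_cross_depth1 ow.
have ws : w != s by rewrite -depth_eq0 dw1.
have cs : c != s by apply: contraNneq ws => cs; rewrite -pcw cs parent_root.
have [_] := parentP cs; rewrite pcw dw1 => dc.
have dc2 : depth c = 2 by have := depth_le2 c; lia.
have degc := deg_tree_split c; rewrite cs nchildren_depth2 // in degc.
have cc1 : #|cross_nbhd c| != 1 by apply: contraTneq (odd_deg c) => cc1; rewrite degc cc1.
have cw1 : 0 < #|cross_nbhd w| by move: ow; case: #|_|.
have wc' : w != c by apply: contraTneq wc => ->; rewrite irr.
have w_notin : w \notin c |: cross_nbhd c by rewrite !inE negb_or wc' pcw eqxx !andbF.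
have := leq_sum_subset (fun x => #|cross_nbhd x|) (w |: (c |: cross_nbhd c)).
rewrite sum_cross_deg // big_setU1 // big_setU1 ?cross_nbhd_irr //=.
have := @leq_mul_card_sum _ (fun x => #|cross_nbhd x|) (cross_nbhd c) 1.
have cross_gt0 y : y \in cross_nbhd c -> 1 <= #|cross_nbhd y|.
  by move=> cy; apply/card_gt0P; exists c; rewrite -cross_nbhd_sym.
by move=> /(_ cross_gt0); rewrite degc; lia.
Qed.

Lemma odd_cross_leaf_nbr w : odd #|cross_nbhd w| ->
  [/\ depth w = 1 & exists2 c, deg e c = 1 & e c w].
Proof.
move=> ow; have [dw1 /card_gt0P[c]] := odd_cross_depth1 ow.
rewrite inE => /andP[wc /eqP pcw]; split => //.
by exists c; [apply: child_of_odd_cross_leaf ow wc pcw | rewrite sym].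
Qed.

Lemma odd_deg_tree_absurd : False.
Proof.
apply: (sum4_odd_not_clique cross_nbhd_sym cross_nbhd_irr (sum_cross_deg sum_deg)).
move=> u v ou ov uv; have [du1 [cu cu1 cuu]] := odd_cross_leaf_nbr ou.
have [dv1 [cv cv1 cvv]] := odd_cross_leaf_nbr ov.
have us : u != s by rewrite -depth_eq0 du1.
have vs : v != s by rewrite -depth_eq0 dv1.
rewrite !inE (leaf_supports_adj cu1 cv1 cuu cvv uv).
by rewrite (parent_depth1 du1) (parent_depth1 dv1) eq_sym vs eq_sym us.
Qed.

End OddDegrees.

End BreadthFirstTree.

Section OddDegreeGraphs.
Variables (T : finType) (e : rel T).
Hypothesis sym : symmetric e.
Hypothesis irr : irreflexive e.
Hypothesis sum_deg : \sum_x deg e x = 2 * (#|T| + 1).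
Hypothesis odd_deg : forall x, odd (deg e x).
Hypothesis within3 : forall x y, within e 3 x y.

Lemma exists_deg1 : exists v, deg e v = 1.
Proof.
case: (pickP (fun v => deg e v == 1)) => [v /eqP | no_leaf]; first by exists v.
have ge3 x : 3 <= deg e x.
  by move: (no_leaf x) (odd_deg x); case: (deg e x) => [|[|[|]]].
have : \sum_(x : T) 3 <= \sum_x deg e x by apply: leq_sum => x _; apply: ge3.
have : \sum_x deg e x <= \sum_(x : T) #|T|.-1.
  by apply: leq_sum => x _; apply: deg_le_card.
by rewrite sum_deg !sum_nat_const; case: #|T| => [|[|[|n]]] /=; lia.
Qed.

Lemma leaf_supports_adj x x' a b :
  deg e x = 1 -> deg e x' = 1 -> e x a -> e x' b -> a != b -> e a b.
Proof.
move=> dx dx' xa x'b ab; have Nx := adj_seq_of_deg1 dx xa.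
have Nx' w : e w x' = (w == b) by rewrite sym (adj_seq_of_deg1 dx' x'b) inE.
have := within3 x x'; rewrite (within_adj_seq _ _ Nx) /= orbF withinS.
case/orP => [/eqP xx' | /orP[/eqP ax' | /existsP[z /andP[az]]]].
- by move: x'b; rewrite -xx' Nx inE eq_sym (negbTE ab).
- by move: (Nx' x); rewrite -ax' xa => /esym/eqP <-; rewrite sym.
rewrite within1 => /orP[/eqP zx' | ].
  by move: (Nx' a); rewrite -zx' az (negbTE ab).
by rewrite Nx' => /eqP <-.
Qed.

Lemma odd_deg_diam3_absurd : False.
Proof.
have [v dv1] := exists_deg1.
have /card_gt0P[s] : 0 < deg e v by rewrite dv1.
rewrite in_nbhd => vs; have Nv := adj_seq_of_deg1 dv1 vs.
apply: (odd_deg_tree_absurd sym irr (s := s) _ sum_deg odd_deg leaf_supports_adj) => x.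
have := within3 v x; rewrite (within_adj_seq _ _ Nv) /= orbF => /orP[/eqP <- | //].
by apply: within_mono; rewrite within1 sym vs orbT.
Qed.

End OddDegreeGraphs.

Lemma even_deg_hub (T : finType) (e : rel T) :
  \sum_x deg e x = 2 * (#|T| + 1) -> (forall x, ~~ odd (deg e x)) ->
  (forall x, 0 < deg e x) -> exists c, deg e c = 4 /\ forall x, x != c -> deg e x = 2.
Proof.
move=> sum_deg even_deg deg_gt0; pose h x := (deg e x)./2.
have degE x : deg e x = 2 * h x.
  by rewrite mul2n /h -[LHS]odd_double_half (negbTE (even_deg x)).
have h_gt0 x : 0 < h x by move: (deg_gt0 x); rewrite degE; lia.
have /sum_nat_eq1[c [_ hc1 h_other]] : \sum_x (h x - 1) == 1.
  rewrite sumnB // sum_nat_const cardT -cardE muln1.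
  move: sum_deg; rewrite (eq_bigr _ (fun x _ => degE x)) -big_distrr /=; lia.
exists c; split; first by rewrite degE; lia.
by move=> x xc; rewrite degE; move: (h_other x xc isT) (h_gt0 x); lia.
Qed.

Section Hub.
Variables (T : finType) (e : rel T).
Hypothesis sym : symmetric e.
Hypothesis irr : irreflexive e.
Variable c : T.
Hypothesis deg2 : forall x, x != c -> deg e x = 2.
Hypothesis within3 : forall x y, within e 3 x y.

Lemma adj_seq_off_hub x y z : x != c -> e y x -> e x z -> y != z ->
  adj_seq e x [:: y; z].
Proof. by move=> xc yx xz yz; apply: adj_seq_of_deg2; rewrite ?deg2 // sym. Qed.

Lemma hub_nbr_other a : e c a -> exists b, [/\ b != c, e a b & adj_seq e a [:: c; b]].
Proof.
move=> ca; have ac : a != c by rewrite eq_sym (adj_neq irr).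
have ac' : e a c by rewrite sym.
by have [b [bc ab Na]] := deg2_other_nbr (deg2 ac) ac'; exists b.
Qed.

Section NoTriangle.
Hypothesis no_triangle : forall u v, e c u -> e c v -> ~~ e u v.

Lemma second_nbr_not_hub_nbr a b : e c a -> e a b -> e c b = false.
Proof. by move=> ca ab; apply/negP => cb; move: (no_triangle ca cb); rewrite ab. Qed.

Lemma hub_nbrs_share_nbr_absurd a a' a'' b :
  e c a -> e c a' -> e c a'' -> a != a' -> a != a'' -> a' != a'' ->
  b != c -> e a b -> e a' b -> False.
Proof.
move=> ca ca' ca'' aa' aa'' a'a'' bc ab a'b.
have ac : a != c by rewrite eq_sym (adj_neq irr).
have a'c : a' != c by rewrite eq_sym (adj_neq irr).
have Na : adj_seq e a [:: c; b] by apply: adj_seq_off_hub; rewrite // eq_sym.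
have Na' : adj_seq e a' [:: c; b] by apply: adj_seq_off_hub; rewrite // eq_sym.
have Nb : adj_seq e b [:: a; a'] by apply: adj_seq_off_hub; rewrite // sym.
have [b'' [b''c a''b'' _]] := hub_nbr_other ca''.
have cb'' := second_nbr_not_hub_nbr ca'' a''b''.
have ab'' : a != b'' by apply: contraTneq a''b'' => <-; rewrite no_triangle.
have a'b'' : a' != b'' by apply: contraTneq a''b'' => <-; rewrite no_triangle.
have bb'' : b != b'' by apply: contraTneq a''b'' => <-; rewrite sym Nb !inE; rewrite_neqs.
move: (within3 b b''); rewrite (within_adj_seq _ _ Nb) /= (within_adj_seq _ _ Na).
by rewrite (within_adj_seq _ _ Na') /= !within1 cb'' Nb !inE; rewrite_neqs.
Qed.

Hypothesis deg4 : deg e c = 4.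

Lemma hub_nbrs_common_nbr u v w : e c u -> e c v -> u != v -> e u w -> e v w -> w = c.
Proof.
move=> cu cv uv uw vw; apply/eqP/negPn/negP => wc.
have [a [a' [/uniq4_neq[_ ua _ [va _ _]] Nc]]] := deg4_adj_seq deg4 cu cv uv.
have ca : e c a by rewrite Nc !inE eqxx !orbT.
exact: hub_nbrs_share_nbr_absurd cu cv ca uv ua va wc uw vw.
Qed.

Section PathFromHubNbr.
Variables a1 b1 d1 y z : T.
Hypotheses (ca1 : e c a1) (b1c : b1 != c).
Hypotheses (Na1 : adj_seq e a1 [:: c; b1]) (Nb1 : adj_seq e b1 [:: a1; d1]).
Hypotheses (Nd1 : adj_seq e d1 [:: b1; y]) (Ny : adj_seq e y [:: d1; z]).

Lemma second_nbr_on_path a b : e c a -> a != a1 -> e a b -> b != c ->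
  b \in [:: d1; y; z].
Proof.
move=> ca aa1 ab bc; have a1b1 : e a1 b1 by rewrite Na1 !inE eqxx orbT.
have bb1 : b1 != b.
  apply: contraNneq b1c => b1b; apply/eqP.
  by apply: (hub_nbrs_common_nbr ca ca1 aa1); rewrite // b1b.
have a1b : a1 != b by apply: contraTneq ab => <-; rewrite no_triangle.
have cb := second_nbr_not_hub_nbr ca ab.
move: (within3 b1 b); rewrite (within_adj_seq _ _ Nb1) /= (within_adj_seq _ _ Na1).
rewrite (within_adj_seq _ _ Nd1) /= !within1 cb Nb1 Ny !inE; rewrite_neqs.
by case_eqs.
Qed.

End PathFromHubNbr.

Lemma no_triangle_absurd : False.
Proof.
have [a1 [a2 [a3 [a4 [U Nc]]]]] := exists_deg4_adj_seq deg4.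
have /uniq4_neq[a12 a13 a14 [a23 a24 a34]] := U.
have [ca1 ca2 ca3 ca4] : [/\ e c a1, e c a2, e c a3 & e c a4].
  by rewrite !Nc !inE !eqxx !orbT.
have [b1 [b1c a1b1 Na1]] := hub_nbr_other ca1.
have cb1 := second_nbr_not_hub_nbr ca1 a1b1.
have [d1 [d1a1 b1d1 Nb1]] := deg2_other_nbr (deg2 b1c) (etrans (sym _ _) a1b1).
have d1c : d1 != c by apply: contraTneq b1d1 => ->; rewrite sym cb1.
have [y [yb1 d1y Nd1]] := deg2_other_nbr (deg2 d1c) (etrans (sym _ _) b1d1).
have yc : y != c.
  apply: contraNneq b1c => yc; have cd1 : e c d1 by rewrite -yc sym.
  by apply/eqP/(hub_nbrs_common_nbr ca1 cd1); rewrite // 1?eq_sym // sym.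
have [z [zd1 yz Ny]] := deg2_other_nbr (deg2 yc) (etrans (sym _ _) d1y).
have on_path := second_nbr_on_path ca1 b1c Na1 Nb1 Nd1 Ny.
have [a21 a31 a41] : [/\ a2 != a1, a3 != a1 & a4 != a1] by rewrite !(eq_sym _ a1).
have [b2 [b2c a2b2 _]] := hub_nbr_other ca2.
have [b3 [b3c a3b3 _]] := hub_nbr_other ca3.
have [b4 [b4c a4b4 _]] := hub_nbr_other ca4.
have bij_neq ai aj bi bj : e c ai -> e c aj -> ai != aj -> e ai bi -> e aj bj ->
    bi != c -> bi != bj.
  move=> cai caj aij aibi ajbj bic; apply: contra_neq bic => bij.
  by apply: (hub_nbrs_common_nbr cai caj aij); rewrite // bij.
have [d1_in y_in] := distinct3_in3
  (on_path _ _ ca2 a21 a2b2 b2c) (on_path _ _ ca3 a31 a3b3 b3c) (on_path _ _ ca4 a41 a4b4 b4c)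
  (bij_neq _ _ _ _ ca2 ca3 a23 a2b2 a3b3 b2c) (bij_neq _ _ _ _ ca2 ca4 a24 a2b2 a4b4 b2c)
  (bij_neq _ _ _ _ ca3 ca4 a34 a3b3 a4b4 b3c).
have hub_nbr_of p : p \in [:: b2; b3; b4] -> exists2 a, e c a & e a p.
  by rewrite !inE => /or3P[]/eqP->; [exists a2 | exists a3 | exists a4].
have [a ca ad1] := hub_nbr_of _ d1_in.
have : a \in [:: b1; y] by rewrite -Nd1 sym.
rewrite !inE => /orP[]/eqP a_eq; first by rewrite a_eq cb1 in ca.
have [a' ca' a'y] := hub_nbr_of _ y_in.
by move: (no_triangle ca' ca); rewrite a_eq a'y.
Qed.

End NoTriangle.
Section Triangle.
Variables a1 a2 a3 a4 : T.
Hypotheses (a12 : a1 != a2) (a13 : a1 != a3) (a14 : a1 != a4).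
Hypotheses (a23 : a2 != a3) (a24 : a2 != a4) (a34 : a3 != a4).
Hypothesis Nc : adj_seq e c [:: a1; a2; a3; a4].
Hypothesis e12 : e a1 a2.

Let ca1 : e c a1. Proof. by rewrite Nc !inE eqxx. Qed.
Let ca2 : e c a2. Proof. by rewrite Nc !inE eqxx !orbT. Qed.
Let ca3 : e c a3. Proof. by rewrite Nc !inE eqxx !orbT. Qed.
Let ca4 : e c a4. Proof. by rewrite Nc !inE eqxx !orbT. Qed.
Let a1c : a1 != c. Proof. by rewrite eq_sym (adj_neq irr). Qed.
Let a2c : a2 != c. Proof. by rewrite eq_sym (adj_neq irr). Qed.
Let a3c : a3 != c. Proof. by rewrite eq_sym (adj_neq irr). Qed.
Let a4c : a4 != c. Proof. by rewrite eq_sym (adj_neq irr). Qed.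
Let Na1 : adj_seq e a1 [:: c; a2].
Proof. by apply: adj_seq_off_hub; rewrite // eq_sym. Qed.
Let Na2 : adj_seq e a2 [:: c; a1].
Proof. by apply: adj_seq_off_hub => //; [rewrite sym | rewrite eq_sym]. Qed.

Lemma triangle_far_nbrs_nonadj : (exists x y, ~~ within e 2 x y) -> ~~ e a3 a4.
Proof.
move=> [x [y /negP]]; apply: contra_notN => a34e; apply: (within2_of_within1 sym (c := c)).
have Na3 : adj_seq e a3 [:: c; a4] by apply: adj_seq_off_hub; rewrite // eq_sym.
have Na4 : adj_seq e a4 [:: c; a3].
  by apply: adj_seq_off_hub => //; [rewrite sym | rewrite eq_sym].
move=> w; move: (within3 c w); unfold_within.
by case_eqs.
Qed.

Lemma triangle_far_nbrs_common_nbr b :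
  A_vertex_magic int e -> e a3 b -> e a4 b -> b = c.
Proof.
move=> [l [l_neq0 [mu l_mu]]] a3b a4b; apply/eqP/negPn/negP => bc.
have Nb : adj_seq e b [:: a3; a4] by apply: adj_seq_off_hub; rewrite // sym.
have sum_at x s : adj_seq e x s -> uniq s -> (\sum_(u <- s) l u)%R = mu.
  by move=> xs us; rewrite -(sum_adj_seq _ xs us).
(* at a1 and a2: l a2 = l a1; at c and b: l a1 + l a2 = 0 *)
have := sum_at _ _ Na1; have := sum_at _ _ Na2; have := sum_at _ _ Nc.
have := sum_at _ _ Nb; rewrite /= !inE !negb_or; rewrite_neqs.
rewrite !big_cons !big_nil => /(_ isT) s_b /(_ isT) s_c /(_ isT) s_a2 /(_ isT) s_a1.
apply/negP: (l_neq0 a1); apply/eqP.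
by clear -s_b s_c s_a2 s_a1; lia.
Qed.

Section FarNbrs.
Variables b3 b4 : T.
Hypotheses (a3b3 : e a3 b3) (a4b4 : e a4 b4) (b3c : b3 != c) (b4c : b4 != c).
Hypotheses (b3a4 : b3 != a4) (b34 : b3 != b4).

Let Na3 : adj_seq e a3 [:: c; b3].
Proof. by apply: adj_seq_off_hub; rewrite // eq_sym. Qed.
Let Na4 : adj_seq e a4 [:: c; b4].
Proof. by apply: adj_seq_off_hub; rewrite // eq_sym. Qed.
Let b3a1 : b3 != a1.
Proof. by apply: contraTneq a3b3 => ->; rewrite sym Na1 !inE; rewrite_neqs. Qed.
Let b3a2 : b3 != a2.
Proof. by apply: contraTneq a3b3 => ->; rewrite sym Na2 !inE; rewrite_neqs. Qed.
Let b3a3 : b3 != a3. Proof. by rewrite eq_sym (adj_neq irr). Qed.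
Let b4a1 : b4 != a1.
Proof. by apply: contraTneq a4b4 => ->; rewrite sym Na1 !inE; rewrite_neqs. Qed.
Let b4a2 : b4 != a2.
Proof. by apply: contraTneq a4b4 => ->; rewrite sym Na2 !inE; rewrite_neqs. Qed.
Let b4a3 : b4 != a3.
Proof. by apply: contraTneq a4b4 => ->; rewrite sym Na3 !inE; rewrite_neqs. Qed.
Let b4a4 : b4 != a4. Proof. by rewrite eq_sym (adj_neq irr). Qed.

Lemma triangle_far_nbrs_adj : e b3 b4.
Proof.
have [d3 [d3a3 b3d3 Nb3]] := deg2_other_nbr (deg2 b3c) (etrans (sym _ _) a3b3).
suff <- : d3 = b4 by [].
apply/eqP; apply: contraTT (within3 a1 d3) => d3b4.
have d3c : d3 != c by apply: contraTneq b3d3 => ->; rewrite sym Nc !inE; rewrite_neqs.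
have d3a1 : d3 != a1 by apply: contraTneq b3d3 => ->; rewrite sym Na1 !inE; rewrite_neqs.
have d3a2 : d3 != a2 by apply: contraTneq b3d3 => ->; rewrite sym Na2 !inE; rewrite_neqs.
have d3a4 : d3 != a4 by apply: contraTneq b3d3 => ->; rewrite sym Na4 !inE; rewrite_neqs.
have d3b3 : d3 != b3 by rewrite eq_sym (adj_neq irr).
by unfold_within; rewrite_neqs.
Qed.

Lemma triangle_pentagon_iso_M11 : graph_iso e M11.
Proof.
have b34e := triangle_far_nbrs_adj.
have Nb3 : adj_seq e b3 [:: a3; b4] by apply: adj_seq_off_hub; rewrite // eq_sym.
have Nb4 : adj_seq e b4 [:: a4; b3].
  by apply: adj_seq_off_hub => //; [rewrite sym | rewrite eq_sym].
pose L := [:: c; a3; b3; b4; a4; a1; a2].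
have UL : uniq L by rewrite /= !inE !negb_or; rewrite_neqs.
have L_all w : w \in L.
  by move: (within3 c w); unfold_within; rewrite -has_pred1 /=; case_eqs.
apply: (graph_iso_of_enum (x0 := c) UL L_all) => // -[i Hi] [j Hj].
do 7?[case: i Hi => [|i] Hi //]; do 7?[case: j Hj => [|j] Hj //]; rewrite /=.
all: first [rewrite Nc | rewrite Na3 | rewrite Nb3 | rewrite Nb4 | rewrite Na4 | rewrite Na1 | rewrite Na2].
all: by rewrite !inE ?eqxx; rewrite_neqs.
Qed.

End FarNbrs.

Lemma triangle_hub_iso_M11 :
  (exists x y, ~~ within e 2 x y) -> A_vertex_magic int e -> graph_iso e M11.
Proof.
move=> D2 Z; have [b3 [b3c a3b3 _]] := hub_nbr_other ca3.
have [b4 [b4c a4b4 _]] := hub_nbr_other ca4.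
have b3a4 : b3 != a4.
  by apply: contraNneq (triangle_far_nbrs_nonadj D2) => <-.
have b34 : b3 != b4.
  apply: contra_neq b3c => b34.
  by apply: (triangle_far_nbrs_common_nbr Z a3b3); rewrite b34.
exact: triangle_pentagon_iso_M11 a3b3 a4b4 b3c b4c b3a4 b34.
Qed.

End Triangle.

Lemma hub_iso_M11 : deg e c = 4 ->
  (exists x y, ~~ within e 2 x y) -> A_vertex_magic int e -> graph_iso e M11.
Proof.
move=> deg4 D2 Z.
case: (pickP (fun p : T * T => [&& e c p.1, e c p.2 & e p.1 p.2])) => [[a1 a2] | none].
  move=> /and3P[/= ca1 ca2 e12].
  have [a3 [a4 [U Nc]]] := deg4_adj_seq deg4 ca1 ca2 (adj_neq irr e12).
  have /uniq4_neq[a12 a13 a14 [a23 a24 a34]] := U.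
  exact: triangle_hub_iso_M11 a12 a13 a14 a23 a24 a34 Nc e12 D2 Z.
exfalso; apply: (@no_triangle_absurd _ deg4) => u v cu cv.
by move: (none (u, v)); rewrite /= cu cv /= => ->.
Qed.

End Hub.

Theorem theorem4p15 (T : finType) (e : rel T) :
  simple_graph e -> bicyclic e -> diameter_eq e 3 ->
  (group_vertex_magic e <-> graph_iso e M11).
Proof.
move=> [sym irr] [_ card_E] [within3 far_pair]; split => [magic | iso]; last first.
  by move=> A A_nontriv; apply: vertex_magic_iso iso (M11_group_vertex_magic A_nontriv).
have sum_deg : \sum_x deg e x = 2 * (#|T| + 1) by rewrite handshake // card_E.
have Z2_magic : A_vertex_magic 'Z_2 e by apply: magic; exists 1%R.
have Z_magic : A_vertex_magic int e by apply: magic; exists 1%R.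
have parity := deg_parity_of_Z2_magic Z2_magic.
have [x0 [y0 far0]] := far_pair.
have x0y0 : x0 != y0 by apply: contraNneq far0 => ->; apply: within_refl.
have [odd0 | even0] := boolP (odd (deg e x0)).
  exfalso; apply: (odd_deg_diam3_absurd sym irr sum_deg _ within3) => x.
  by rewrite (parity x x0).
have [c [deg4 deg2]] : exists c, deg e c = 4 /\ forall x, x != c -> deg e x = 2.
  apply: even_deg_hub sum_deg _ (fun x => deg_gt0_of_within x within3 x0y0) => x.
  by rewrite (parity x x0).
exact: (hub_iso_M11 sym irr deg2 within3 deg4 far_pair Z_magic).
Qed.
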